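(* Let $\alpha\in(1,2)$ and let $p\ge2$ be an integer. Then $f^{p,\alpha}(\theta)\ge0$ for all $\theta\in[-\pi,\pi]$, $f^{p,\alpha}(\theta)=0$ for $\theta\in[-\pi,\pi]$ only at $\theta=0$, and this zero has order $\alpha$, i.e. $f^{p,\alpha}(\theta)/|\theta|^\alpha$ tends to a finite positive limit as $\theta\to0$.
   Context: For real $\alpha$ and integer $p\ge 2$, $f^{p,\alpha}(\theta)=\sum_{l\in\mathbb Z}|\theta+2l\pi|^{\alpha}\left(\frac{\sin(\theta/2+l\pi)}{\theta/2+l\pi}\right)^{p+1}$ (with $\frac{\sin x}{x}:=1$ at $x=0$). *)

From Stdlib Require Import Reals ZArith.
From Coquelicot Require Import Coquelicot.
Open Scope R_scope.

(* |x|^a for real a, with the convention |0|^a = 0 (a > 0 throughout). *)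
Definition abspow (x a : R) : R :=
  if Req_EM_T x 0 then 0 else Rpower (Rabs x) a.

Definition sinc (x : R) : R :=
  if Req_EM_T x 0 then 1 else sin x / x.

Definition fterm (p : nat) (alpha theta : R) (l : Z) : R :=
  abspow (theta + 2 * IZR l * PI) alpha * (sinc (theta / 2 + IZR l * PI)) ^ (p + 1).

(* Sum over l in Z, written as term 0 + sum_{n>=1} (term n + term (-n));
   the series is absolutely convergent for p >= 2, alpha < 2. *)
Definition f_p_alpha (p : nat) (alpha theta : R) : R :=
  Series (fun n : nat =>
    if Nat.eqb n 0 then fterm p alpha theta 0%Z
    else fterm p alpha theta (Z.of_nat n) + fterm p alpha theta (- Z.of_nat n)%Z).

From Stdlib Require Import Reals ZArith Lra Lia.
From Coquelicot Require Import Coquelicot.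
Open Scope R_scope.

(* Put y = theta/2 + l pi, so sin y = +-sin(theta/2).  Every term with l <> 0 is
   then bounded by 8 |sin(theta/2)|^3 |l|^(alpha-3), and these bounds are summable
   because alpha - 3 < -1 (telescoping against x^(alpha-2)).  Hence f splits into
   the central term l = 0 plus two tails, each O(|sin(theta/2)|^3).
   - At theta = 0 everything vanishes; near 0 the central term is
     |theta|^alpha (1 + O(theta)) and the tails are O(|theta|^3), which gives the
     limit 1 of f(theta)/|theta|^alpha.
   - For 0 < theta <= pi, pairing l = n with l = -(n+1) writes f as
     (2 sin(theta/2))^(p+1) sum_n s^n m_n, where s = (-1)^(p+1) = +-1 and m_n is a
     sum of two values of the decreasing function x^(alpha-p-1); such a series
     is at least m_0 - m_1 > 0.  Evenness of f covers theta < 0. *)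

Lemma PI_gt_3 : 3 < PI.
Proof. pose proof PI2_3_2; lra. Qed.

Lemma Rpower_gt_0 (x y : R) : 0 < Rpower x y.
Proof. apply exp_pos. Qed.

Lemma Rpower_antitone_base (a b e : R) :
  0 < a -> a <= b -> e <= 0 -> Rpower b e <= Rpower a e.
Proof.
  intros Ha Hab He. rewrite <- (Ropp_involutive e), (Rpower_Ropp b (- e)), (Rpower_Ropp a (- e)).
  apply Rinv_le_contravar; [apply Rpower_gt_0 | apply Rle_Rpower_l; lra].
Qed.

Lemma Rpower_antitone_base_strict (a b e : R) :
  0 < a -> a < b -> e < 0 -> Rpower b e < Rpower a e.
Proof.
  intros Ha Hab He. rewrite <- (Ropp_involutive e), (Rpower_Ropp b (- e)), (Rpower_Ropp a (- e)).
  apply Rinv_lt_contravar.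
  - apply Rmult_lt_0_compat; apply Rpower_gt_0.
  - apply Rlt_Rpower_l; lra.
Qed.

Lemma Rpower_antitone_exponent (x a b : R) :
  0 < x <= 1 -> a <= b -> Rpower x b <= Rpower x a.
Proof.
  intros Hx Hab. unfold Rpower.
  assert (Hln : ln x <= 0) by (rewrite <- ln_1; apply ln_le; lra).
  assert (Hle : b * ln x <= a * ln x) by nra.
  destruct (Rle_lt_or_eq_dec _ _ Hle) as [Hlt | ->]; [left; apply exp_increasing|]; lra.
Qed.

Lemma Rpower_div_pow (z a : R) (k : nat) : 0 < z -> Rpower z a / z ^ k = Rpower z (a - INR k).
Proof. intros Hz. unfold Rminus. rewrite Rpower_plus, Rpower_Ropp, Rpower_pow; auto. Qed.

Lemma sin_shift_PI (y : R) (n : nat) : sin (y + INR n * PI) = (-1) ^ n * sin y.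
Proof.
  induction n as [|n IH]; [simpl; rewrite Rmult_0_l, Rplus_0_r; ring|].
  rewrite S_INR. replace (y + (INR n + 1) * PI) with ((y + INR n * PI) + PI) by ring.
  rewrite neg_sin, IH. simpl. ring.
Qed.

Lemma abspow_opp (x a : R) : abspow (- x) a = abspow x a.
Proof.
  unfold abspow. destruct (Req_EM_T (- x) 0); destruct (Req_EM_T x 0); try lra.
  rewrite Rabs_Ropp; reflexivity.
Qed.

Lemma sinc_opp (x : R) : sinc (- x) = sinc x.
Proof.
  unfold sinc. destruct (Req_EM_T (- x) 0); destruct (Req_EM_T x 0); try lra.
  rewrite sin_neg. field. assumption.
Qed.

Lemma fterm_opp (p : nat) (alpha theta : R) (l : Z) :
  fterm p alpha (- theta) l = fterm p alpha theta (- l).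
Proof.
  unfold fterm. rewrite opp_IZR.
  replace (theta + 2 * - IZR l * PI) with (- (- theta + 2 * IZR l * PI)) by ring.
  replace (theta / 2 + - IZR l * PI) with (- (- theta / 2 + IZR l * PI)) by field.
  rewrite abspow_opp, sinc_opp. reflexivity.
Qed.

Lemma f_p_alpha_even (p : nat) (alpha theta : R) :
  f_p_alpha p alpha (- theta) = f_p_alpha p alpha theta.
Proof.
  unfold f_p_alpha. apply Series_ext. intros [|n]; simpl.
  - rewrite fterm_opp. reflexivity.
  - rewrite !fterm_opp. simpl. ring.
Qed.

Lemma Series_ge_partial_sums_lb (a : nat -> R) (L : R) :
  ex_series a -> (forall N, L <= sum_f_R0 a N) -> L <= Series a.
Proof.
  intros Ha HN.
  assert (Hlim : Rbar_le L (Series a)).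
  { apply (is_lim_seq_le (fun _ => L) (sum_n a)); [|apply is_lim_seq_const|apply Series_correct, Ha].
    intros n. rewrite sum_n_Reals. apply HN. }
  exact Hlim.
Qed.

(* The weights (n+1)^(alpha-3); they dominate the terms with l <> 0. *)
Definition weight (alpha : R) (n : nat) : R := Rpower (INR (S n)) (alpha - 3).

(* Convexity of x^(-t): the terms (a+1)^(-t-1) are bounded by the increments
   of (1/t) x^(-t), whence a telescoping bound on the partial sums. *)
Lemma Rpower_increment_lb (a t : R) : 0 < a -> 0 < t ->
  t * Rpower (a + 1) (- t - 1) <= Rpower a (- t) - Rpower (a + 1) (- t).
Proof.
  intros Ha Ht. unfold Rpower.
  set (A := ln a). set (B := ln (a + 1)).
  assert (EA : exp A = a) by (apply exp_ln; lra).
  assert (EB : exp B = a + 1) by (apply exp_ln; lra).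
  (* ln (a+1) - ln a >= 1/(a+1), from exp (A - B) = a/(a+1) >= 1 + (A - B) *)
  assert (Hlog : B - A >= / (a + 1)).
  { assert (E : exp (A - B) = 1 - / (a + 1)).
    { unfold Rminus. rewrite exp_plus, exp_Ropp, EA, EB. field. lra. }
    pose proof (exp_ineq1_le (A - B)). lra. }
  pose proof (exp_ineq1_le (t * (B - A))) as Hexp.
  replace ((- t - 1) * B) with (- t * B + - B) by ring.
  replace (- t * A) with (- t * B + t * (B - A)) by ring.
  rewrite !exp_plus, exp_Ropp, EB.
  assert (HE := exp_pos (- t * B)).
  assert (0 < / (a + 1)) by (apply Rinv_0_lt_compat; lra).
  assert (exp (t * (B - A)) - 1 >= t * / (a + 1)) by nra.
  nra.
Qed.

Lemma weight_partial_sums_le (alpha : R) (N : nat) : alpha < 2 ->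
  sum_f_R0 (weight alpha) N <= 1 + / (2 - alpha) * (1 - Rpower (INR (S N)) (alpha - 2)).
Proof.
  intros Hal. set (t := 2 - alpha). assert (Ht : 0 < t) by (unfold t; lra).
  unfold weight. replace (alpha - 3) with (- t - 1) by (unfold t; ring).
  replace (alpha - 2) with (- t) by (unfold t; ring).
  induction N as [|N IH].
  - simpl. unfold Rpower. rewrite ln_1, !Rmult_0_r, exp_0. lra.
  - rewrite tech5. cbv beta.
    pose proof (Rpower_increment_lb (INR (S N)) t (lt_0_INR _ (Nat.lt_0_succ N)) Ht) as T.
    rewrite (S_INR (S N)).
    assert (Rpower (INR (S N) + 1) (- t - 1)
            <= / t * (Rpower (INR (S N)) (- t) - Rpower (INR (S N) + 1) (- t))).
    { apply (Rmult_le_reg_l t); [assumption|].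
      rewrite <- Rmult_assoc, Rinv_r, Rmult_1_l by lra. lra. }
    lra.
Qed.

Lemma ex_series_weight (alpha : R) : alpha < 2 -> ex_series (weight alpha).
Proof.
  intros Hal.
  assert (Ht : 0 < / (2 - alpha)) by (apply Rinv_0_lt_compat; lra).
  assert (H : ex_finite_lim_seq (sum_n (weight alpha))).
  { apply ex_finite_lim_seq_incr with (M := 1 + / (2 - alpha)).
    - intros n. rewrite !sum_n_Reals, tech5. pose proof (Rpower_gt_0 (INR (S (S n))) (alpha - 3)).
      unfold weight at 3. lra.
    - intros n. rewrite sum_n_Reals.
      pose proof (weight_partial_sums_le alpha n Hal). pose proof (Rpower_gt_0 (INR (S n)) (alpha - 2)).
      nra. }
  destruct H as [l Hl]. exists l. exact Hl.
Qed.

Lemma Series_weight_nonneg (alpha : R) : alpha < 2 -> 0 <= Series (weight alpha).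
Proof.
  intros Hal. apply Series_ge_partial_sums_lb; [apply ex_series_weight, Hal|].
  intros N. induction N as [|N IH]; simpl.
  - left; apply Rpower_gt_0.
  - pose proof (Rpower_gt_0 (INR (S (S N))) (alpha - 3)). unfold weight at 2. lra.
Qed.

Lemma sinc_pow_le_cube (p : nat) (y : R) : (2 <= p)%nat -> 1 <= Rabs y ->
  Rabs (sinc y ^ (p + 1)) <= (Rabs (sin y) / Rabs y) ^ 3.
Proof.
  intros Hp Hy.
  assert (Hy0 : y <> 0) by (intros ->; rewrite Rabs_R0 in Hy; lra).
  unfold sinc. destruct (Req_EM_T y 0) as [E|_]; [contradiction|].
  rewrite <- RPow_abs, Rabs_div by assumption.
  set (q := Rabs (sin y) / Rabs y).
  assert (Hq : 0 <= q <= 1).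
  { assert (Rabs (sin y) <= 1) by (apply Rabs_le, SIN_bound).
    unfold q; split; [apply Rdiv_le_0_compat; [apply Rabs_pos|lra]|].
    apply Rcomplements.Rle_div_l; lra. }
  replace (p + 1)%nat with (3 + (p - 2))%nat by lia. rewrite pow_add.
  assert (q ^ (p - 2) <= 1) by (rewrite <- (pow1 (p - 2)); apply pow_incr; lra).
  pose proof (pow_le q 3 (proj1 Hq)). nra.
Qed.

(* A term of the sum at a point y = theta/2 + l pi with |l| >= N >= 1. *)
Lemma far_term_bound (p : nat) (alpha y N : R) : (2 <= p)%nat -> alpha <= 3 -> 1 <= N ->
  N * PI - PI / 2 <= Rabs y ->
  Rabs (abspow (2 * y) alpha * sinc y ^ (p + 1)) <= 8 * Rabs (sin y) ^ 3 * Rpower N (alpha - 3).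
Proof.
  intros Hp Hal HN Hy. pose proof PI_gt_3.
  assert (Hy1 : 1 <= Rabs y) by nra.
  assert (Hpow : abspow (2 * y) alpha = Rpower (2 * Rabs y) alpha).
  { unfold abspow. destruct (Req_EM_T (2 * y) 0) as [E|_].
    - assert (y = 0) by lra. subst. rewrite Rabs_R0 in Hy1. lra.
    - rewrite Rabs_mult, Rabs_pos_eq by lra. reflexivity. }
  rewrite Rabs_mult, Hpow, (Rabs_pos_eq (Rpower _ _)) by (left; apply Rpower_gt_0).
  eapply Rle_trans.
  { apply Rmult_le_compat_l; [left; apply Rpower_gt_0|apply sinc_pow_le_cube; assumption]. }
  replace (Rpower (2 * Rabs y) alpha * (Rabs (sin y) / Rabs y) ^ 3)
    with (8 * Rabs (sin y) ^ 3 * (Rpower (2 * Rabs y) alpha / (2 * Rabs y) ^ 3)) by (field; lra).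
  rewrite Rpower_div_pow by lra. replace (INR 3) with 3 by (simpl; ring).
  apply Rmult_le_compat_l; [pose proof (pow_le _ 3 (Rabs_pos (sin y))); lra|].
  apply Rpower_antitone_base; nra.
Qed.

(* The terms with l = n + 1 >= 1; those with l <= -1 are tail p alpha (- theta). *)
Definition tail (p : nat) (alpha theta : R) (n : nat) : R :=
  fterm p alpha theta (Z.of_nat (S n)).

Lemma tail_opp (p : nat) (alpha theta : R) (n : nat) :
  tail p alpha (- theta) n = fterm p alpha theta (- Z.of_nat (S n)).
Proof. apply fterm_opp. Qed.

Lemma tail_bound (p : nat) (alpha theta : R) (n : nat) :
  (2 <= p)%nat -> alpha <= 3 -> Rabs theta <= PI ->
  Rabs (tail p alpha theta n) <= 8 * Rabs (sin (theta / 2)) ^ 3 * weight alpha n.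
Proof.
  intros Hp Hal Hth. unfold tail, fterm, weight. rewrite <- INR_IZR_INZ.
  replace (theta + 2 * INR (S n) * PI) with (2 * (theta / 2 + INR (S n) * PI)) by field.
  assert (HN : 1 <= INR (S n)) by (rewrite S_INR; pose proof (pos_INR n); lra).
  assert (Hlow : - theta <= PI) by (rewrite <- Rabs_Ropp in Hth; pose proof (Rle_abs (- theta)); lra).
  eapply Rle_trans.
  { apply (far_term_bound p alpha _ (INR (S n))); [assumption|assumption|assumption|].
    eapply Rle_trans; [|apply Rle_abs]. nra. }
  rewrite sin_shift_PI, Rabs_mult, pow_1_abs, Rmult_1_l. right; reflexivity.
Qed.

Lemma series_dominated (a w : nat -> R) (c : R) :
  ex_series w -> (forall n, Rabs (a n) <= c * w n) ->
  ex_series a /\ Rabs (Series a) <= c * Series w.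
Proof.
  intros Hw Hdom.
  assert (Hcw : ex_series (fun n => w n * c)) by (apply ex_series_scal_r, Hw).
  assert (Habs : ex_series (fun n => Rabs (a n))).
  { apply (@ex_series_le R_AbsRing R_CompleteNormedModule) with (b := fun n => w n * c);
      [|exact Hcw].
    intros n. change (norm (Rabs (a n))) with (Rabs (Rabs (a n))).
    rewrite Rabs_Rabsolu, Rmult_comm. apply Hdom. }
  split; [apply ex_series_Rabs, Habs|].
  eapply Rle_trans; [apply Series_Rabs, Habs|].
  eapply Rle_trans.
  { apply Series_le with (b := fun n => w n * c); [|exact Hcw].
    intros n. split; [apply Rabs_pos|rewrite Rmult_comm; apply Hdom]. }
  rewrite Series_scal_r. lra.
Qed.

Section Tails.

Variables (p : nat) (alpha : R).
Hypothesis Hp : (2 <= p)%nat.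
Hypothesis Halpha : alpha < 2.

Lemma tail_series (theta : R) : Rabs theta <= PI ->
  ex_series (tail p alpha theta) /\
  Rabs (Series (tail p alpha theta)) <= 8 * Rabs (sin (theta / 2)) ^ 3 * Series (weight alpha).
Proof.
  intros Hth. apply series_dominated; [apply ex_series_weight, Halpha|].
  intros n. apply tail_bound; [exact Hp|lra|exact Hth].
Qed.

Lemma f_p_alpha_split (theta : R) : Rabs theta <= PI ->
  f_p_alpha p alpha theta =
  fterm p alpha theta 0 + Series (tail p alpha theta) + Series (tail p alpha (- theta)).
Proof.
  intros Hth.
  destruct (tail_series theta Hth) as [Hpos _].
  destruct (tail_series (- theta)) as [Hneg _]; [rewrite Rabs_Ropp; exact Hth|].
  unfold f_p_alpha.
  set (a := fun n : nat => if Nat.eqb n 0 then fterm p alpha theta 0%Z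
      else fterm p alpha theta (Z.of_nat n) + fterm p alpha theta (- Z.of_nat n)%Z).
  assert (Ha : forall n, a (S n) = tail p alpha theta n + tail p alpha (- theta) n)
    by (intros n; rewrite tail_opp; reflexivity).
  assert (Hex : ex_series a).
  { apply ex_series_incr_1. eapply ex_series_ext; [intros n; symmetry; apply Ha|].
    apply (ex_series_plus (tail p alpha theta) (tail p alpha (- theta))); assumption. }
  rewrite Series_incr_1 by exact Hex.
  rewrite (Series_ext _ _ Ha), Series_plus by assumption. unfold a at 1. simpl. ring.
Qed.

(* Pairing the term l = n with the term l = -(n+1). *)
Lemma f_p_alpha_paired (theta : R) : Rabs theta <= PI ->
  ex_series (fun n => fterm p alpha theta (Z.of_nat n) + tail p alpha (- theta) n) /\
  f_p_alpha p alpha theta =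
  Series (fun n => fterm p alpha theta (Z.of_nat n) + tail p alpha (- theta) n).
Proof.
  intros Hth.
  destruct (tail_series theta Hth) as [Hpos _].
  destruct (tail_series (- theta)) as [Hneg _]; [rewrite Rabs_Ropp; exact Hth|].
  assert (Hnonneg : ex_series (fun n => fterm p alpha theta (Z.of_nat n)))
    by (apply ex_series_incr_1; exact Hpos).
  split; [apply (ex_series_plus _ _ Hnonneg Hneg)|].
  rewrite Series_plus, Series_incr_1 by assumption.
  rewrite f_p_alpha_split by exact Hth. reflexivity.
Qed.

End Tails.

(* For 0 < theta <= pi write x_l = theta + 2 l pi > 0 (l >= 0); then the l-th
   term is (2 sin(theta/2))^(p+1) * sign^l * x_l^(alpha - p - 1). *)
Definition decay (p : nat) (alpha z : R) : R := Rpower z (alpha - INR (p + 1)).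
Definition sign (p : nat) : R := (-1) ^ (p + 1).

Lemma sign_cases (p : nat) : sign p = 1 \/ sign p = -1.
Proof.
  unfold sign. destruct (Nat.Even_or_Odd (p + 1)) as [[k Hk]|[k Hk]]; rewrite Hk.
  - left. apply pow_1_even.
  - right. rewrite pow_add, pow_1_even. simpl. ring.
Qed.

Lemma fterm_closed_form (p : nat) (alpha theta : R) (n : nat) :
  0 < theta + 2 * INR n * PI ->
  fterm p alpha theta (Z.of_nat n) =
  (2 * sin (theta / 2)) ^ (p + 1) * sign p ^ n * decay p alpha (theta + 2 * INR n * PI).
Proof.
  intros Hx. unfold fterm, abspow, sinc, decay, sign. rewrite <- INR_IZR_INZ.
  set (x := theta + 2 * INR n * PI) in *.
  assert (Hy : theta / 2 + INR n * PI = x / 2) by (unfold x; field).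
  assert (Hs : sin (x / 2) = (-1) ^ n * sin (theta / 2)) by (rewrite <- Hy; apply sin_shift_PI).
  rewrite Hy, Hs.
  destruct (Req_EM_T x 0) as [E|_]; [lra|].
  destruct (Req_EM_T (x / 2) 0) as [E|_]; [lra|].
  rewrite Rabs_pos_eq, <- Rpower_div_pow by lra.
  rewrite <- pow_mult, Nat.mul_comm, pow_mult.
  replace ((-1) ^ n * sin (theta / 2) / (x / 2)) with ((-1) ^ n * (2 * sin (theta / 2)) * / x)
    by (field; lra).
  rewrite !Rpow_mult_distr, pow_inv. field. apply pow_nonzero; lra.
Qed.

Definition pair_weight (p : nat) (alpha theta : R) (n : nat) : R :=
  decay p alpha (theta + 2 * INR n * PI) + decay p alpha (2 * INR (S n) * PI - theta).

Lemma paired_term_closed_form (p : nat) (alpha theta : R) (n : nat) : 0 < theta <= PI ->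
  fterm p alpha theta (Z.of_nat n) + tail p alpha (- theta) n =
  (2 * sin (theta / 2)) ^ (p + 1) * (sign p ^ n * pair_weight p alpha theta n).
Proof.
  intros Hth. pose proof PI_gt_3. pose proof (pos_INR n).
  unfold tail. rewrite !fterm_closed_form by (rewrite ?S_INR; nra).
  replace (- theta / 2) with (- (theta / 2)) by field. rewrite sin_neg.
  replace (2 * - sin (theta / 2)) with (-1 * (2 * sin (theta / 2))) by ring.
  rewrite (Rpow_mult_distr (-1)). fold (sign p).
  replace (- theta + 2 * INR (S n) * PI) with (2 * INR (S n) * PI - theta) by ring.
  change (sign p ^ S n) with (sign p * sign p ^ n). unfold pair_weight.
  destruct (sign_cases p) as [E|E]; rewrite E; ring.
Qed.

Lemma alternating_partial_sums (h : nat -> R) :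
  (forall n, 0 <= h n) -> (forall n, h (S n) <= h n) ->
  forall N, h 0%nat - h 1%nat <= sum_f_R0 (fun n => (-1) ^ n * h n) N <= h 0%nat.
Proof.
  intros H0 H1 N. revert h H0 H1. induction N as [|N IH]; intros h H0 H1.
  - simpl. specialize (H0 1%nat). lra.
  - rewrite decomp_sum by lia. simpl Init.Nat.pred.
    assert (E : sum_f_R0 (fun i => (-1) ^ S i * h (S i)) N
                = - sum_f_R0 (fun n => (-1) ^ n * h (S n)) N).
    { clear. induction N as [|N IH]; [simpl; ring|]. rewrite !tech5, IH. simpl. ring. }
    rewrite E. destruct (IH (fun n => h (S n))) as [A B]; [intros n; apply H0|intros n; apply H1|].
    simpl in *. specialize (H1 1%nat). specialize (H0 2%nat). lra.
Qed.

Lemma signed_series_lb (s : R) (h : nat -> R) : s = 1 \/ s = -1 ->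
  (forall n, 0 <= h n) -> (forall n, h (S n) <= h n) ->
  ex_series (fun n => s ^ n * h n) -> h 0%nat - h 1%nat <= Series (fun n => s ^ n * h n).
Proof.
  intros Hs H0 H1 Hex. apply Series_ge_partial_sums_lb; [exact Hex|]. intros N.
  destruct Hs as [-> | ->]; [|apply alternating_partial_sums; assumption].
  induction N as [|N IH].
  - simpl. specialize (H0 1%nat). lra.
  - rewrite tech5, pow1. specialize (H0 (S N)). lra.
Qed.

Section Positivity.

Variables (p : nat) (alpha theta : R).
Hypothesis Hp : (2 <= p)%nat.
Hypothesis Halpha : alpha < 2.
Hypothesis Htheta : 0 < theta <= PI.

Lemma decay_exponent_neg : alpha - INR (p + 1) < 0.
Proof.
  assert (3 <= INR (p + 1)) by (replace 3 with (INR 3) by (simpl; ring); apply le_INR; lia).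
  lra.
Qed.

Lemma pair_weight_nonneg (n : nat) : 0 <= pair_weight p alpha theta n.
Proof.
  pose proof (Rpower_gt_0 (theta + 2 * INR n * PI) (alpha - INR (p + 1))).
  pose proof (Rpower_gt_0 (2 * INR (S n) * PI - theta) (alpha - INR (p + 1))).
  unfold pair_weight, decay. lra.
Qed.

Lemma pair_weight_antitone (n : nat) : pair_weight p alpha theta (S n) <= pair_weight p alpha theta n.
Proof.
  pose proof PI_gt_3. pose proof (pos_INR n). pose proof decay_exponent_neg.
  unfold pair_weight, decay. rewrite !S_INR.
  apply Rplus_le_compat; apply Rpower_antitone_base; nra.
Qed.

Lemma pair_weight_gap : pair_weight p alpha theta 1 < pair_weight p alpha theta 0.
Proof.
  pose proof PI_gt_3. pose proof decay_exponent_neg.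
  unfold pair_weight, decay. simpl INR.
  apply Rplus_lt_le_compat; [apply Rpower_antitone_base_strict|apply Rpower_antitone_base]; nra.
Qed.

(* Strict positivity on (0, pi]: f = (2 sin(theta/2))^(p+1) sum_n sign^n m_n,
   and the last series is at least m_0 - m_1 > 0. *)
Lemma f_p_alpha_pos_right : 0 < f_p_alpha p alpha theta.
Proof.
  pose proof PI_gt_3.
  set (c := (2 * sin (theta / 2)) ^ (p + 1)).
  assert (Hc : 0 < c) by (apply pow_lt; pose proof (sin_gt_0 (theta / 2)); lra).
  set (g := fun n => sign p ^ n * pair_weight p alpha theta n).
  assert (Hpair : forall n, fterm p alpha theta (Z.of_nat n) + tail p alpha (- theta) n = c * g n)
    by (intros n; apply paired_term_closed_form, Htheta).
  destruct (f_p_alpha_paired p alpha Hp Halpha theta) as [Hex Hf]; [rewrite Rabs_pos_eq; lra|].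
  assert (Hg : ex_series g).
  { eapply ex_series_ext; [|apply (ex_series_scal_r (/ c) _ Hex)].
    intros n. cbv beta. rewrite Hpair, Rmult_comm, <- Rmult_assoc, Rinv_l, Rmult_1_l by lra.
    reflexivity. }
  rewrite Hf, (Series_ext _ _ Hpair), Series_scal_l.
  apply Rmult_lt_0_compat; [exact Hc|].
  pose proof (signed_series_lb (sign p) (pair_weight p alpha theta) (sign_cases p)
    pair_weight_nonneg pair_weight_antitone Hg) as Hlb.
  fold g in Hlb. pose proof pair_weight_gap. lra.
Qed.

End Positivity.

Lemma abspow_nonzero (x a : R) : x <> 0 -> abspow x a = Rpower (Rabs x) a.
Proof. intros Hx. unfold abspow. destruct (Req_EM_T x 0); [contradiction|reflexivity]. Qed.

Lemma sinc_near_zero (y : R) : 0 < Rabs y <= 1 -> 1 - y ^ 2 <= sin y / y <= 1.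
Proof.
  assert (Hpos : forall y, 0 < y <= 1 -> 1 - y ^ 2 <= sin y / y <= 1).
  { intros z Hz. pose proof PI_gt_3.
    pose proof (sin_lt_x z (proj1 Hz)).
    destruct (sin_bound z 0 ltac:(lra) ltac:(lra)) as [Hlow _].
    unfold sin_approx, sin_term in Hlow. simpl in Hlow.
    split; [apply Rcomplements.Rle_div_r; [lra|nra]|apply Rcomplements.Rle_div_l; lra]. }
  intros Hy. destruct (Rlt_or_le 0 y) as [Hy0|Hy0].
  - apply Hpos. rewrite Rabs_pos_eq in Hy; lra.
  - assert (y <> 0) by (intros ->; rewrite Rabs_R0 in Hy; lra).
    rewrite Rabs_left1 in Hy by lra.
    replace (sin y / y) with (sin (- y) / (- y)) by (rewrite sin_neg; field; assumption).
    replace (y ^ 2) with ((- y) ^ 2) by ring. apply Hpos; lra.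
Qed.

Lemma pow_bernoulli (q : R) (k : nat) : 0 <= q <= 1 -> 1 - INR k * (1 - q) <= q ^ k <= 1.
Proof.
  intros Hq. induction k as [|k IH]; [simpl; lra|].
  rewrite S_INR. simpl. pose proof (pos_INR k). split; nra.
Qed.

Lemma central_term_ratio (p : nat) (alpha theta : R) : 0 < Rabs theta <= 1 ->
  Rabs (fterm p alpha theta 0 / abspow theta alpha - 1) <= INR (p + 1) * Rabs theta.
Proof.
  intros Hth. pose proof PI_gt_3.
  assert (Hne : theta <> 0) by (intros ->; rewrite Rabs_R0 in Hth; lra).
  assert (Hhalf : 0 < Rabs (theta / 2) <= 1)
    by (unfold Rdiv; rewrite Rabs_mult, Rabs_inv, (Rabs_pos_eq 2) by lra; lra).
  assert (Hratio : fterm p alpha theta 0 / abspow theta alpha = (sin (theta / 2) / (theta / 2)) ^ (p + 1)).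
  { unfold fterm. replace (theta + 2 * IZR 0 * PI) with theta by (simpl; ring).
    replace (theta / 2 + IZR 0 * PI) with (theta / 2) by (simpl; ring).
    unfold sinc. destruct (Req_EM_T (theta / 2) 0) as [E|_]; [lra|].
    rewrite (abspow_nonzero theta alpha Hne). field.
    pose proof (Rpower_gt_0 (Rabs theta) alpha). lra. }
  set (q := sin (theta / 2) / (theta / 2)) in *.
  destruct (sinc_near_zero (theta / 2) Hhalf) as [Q1 Q2]. fold q in Q1, Q2.
  assert (Hsq : (theta / 2) ^ 2 <= Rabs theta / 4).
  { replace ((theta / 2) ^ 2) with (Rabs theta ^ 2 / 4) by (rewrite pow2_abs; field). nra. }
  rewrite Hratio.
  destruct (pow_bernoulli q (p + 1)) as [B1 B2]; [lra|].
  rewrite Rabs_left1 by lra.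
  assert (INR (p + 1) * (1 - q) <= INR (p + 1) * Rabs theta)
    by (apply Rmult_le_compat_l; [apply pos_INR|lra]).
  lra.
Qed.

Lemma sin_half_cube_le (theta : R) : 0 < Rabs theta <= 1 ->
  8 * Rabs (sin (theta / 2)) ^ 3 <= Rabs theta ^ 3.
Proof.
  intros Hth.
  assert (Hne : theta <> 0) by (intros ->; rewrite Rabs_R0 in Hth; lra).
  assert (Hhalf : Rabs (theta / 2) = Rabs theta / 2)
    by (unfold Rdiv; rewrite Rabs_mult, Rabs_inv, (Rabs_pos_eq 2) by lra; reflexivity).
  destruct (sinc_near_zero (theta / 2)) as [Q1 Q2]; [lra|].
  assert (Hq : 0 <= sin (theta / 2) / (theta / 2)).
  { assert ((theta / 2) ^ 2 <= 1) by (rewrite <- pow2_abs, Hhalf; nra). lra. }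
  assert (Hs : Rabs (sin (theta / 2)) <= Rabs theta / 2).
  { replace (sin (theta / 2)) with (sin (theta / 2) / (theta / 2) * (theta / 2)) by (field; lra).
    rewrite Rabs_mult, Hhalf, (Rabs_pos_eq (sin (theta / 2) / (theta / 2))) by exact Hq.
    pose proof (Rabs_pos theta). nra. }
  replace (Rabs theta ^ 3) with (8 * (Rabs theta / 2) ^ 3) by field.
  apply Rmult_le_compat_l; [lra|]. apply pow_incr. split; [apply Rabs_pos|exact Hs].
Qed.

Lemma abs_sq_le_abspow (alpha theta : R) : alpha <= 2 -> 0 < Rabs theta <= 1 ->
  Rabs theta ^ 2 <= abspow theta alpha.
Proof.
  intros Hal Hth.
  assert (Hne : theta <> 0) by (intros ->; rewrite Rabs_R0 in Hth; lra).
  rewrite abspow_nonzero, <- Rpower_pow by (exact Hne || lra).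
  apply Rpower_antitone_exponent; [lra|]. simpl INR. lra.
Qed.

Lemma is_lim_of_linear_bound (g : R -> R) (L C : R) :
  (forall y, 0 < Rabs y < 1 -> Rabs (g y - L) <= C * Rabs y) -> is_lim g 0 L.
Proof.
  intros Hbound.
  assert (Hlin : forall a, is_lim (fun y => L + a * Rabs y) 0 L).
  { intros a.
    assert (Hc : continuity_pt (fun y => L + a * Rabs y) 0).
    { apply continuity_pt_plus; [apply continuity_pt_const; intros ? ?; reflexivity|].
      apply continuity_pt_scal, Rcontinuity_abs. }
    pose proof (is_lim_continuity _ 0 Hc) as H. cbv beta in H.
    rewrite Rabs_R0, Rmult_0_r, Rplus_0_r in H. exact H. }
  apply (is_lim_le_le_loc (fun y => L + - C * Rabs y) (fun y => L + C * Rabs y));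
    [|apply Hlin|apply Hlin].
  exists (mkposreal 1 Rlt_0_1). intros y Hy Hy0.
  change (Rabs (y - 0) < 1) in Hy. rewrite Rminus_0_r in Hy.
  assert (0 < Rabs y) by (apply Rabs_pos_lt, Hy0).
  pose proof (Hbound y (conj H Hy)) as B. apply Rabs_le_between' in B. lra.
Qed.

Section Asymptotics.

Variables (p : nat) (alpha : R).
Hypothesis Hp : (2 <= p)%nat.
Hypothesis Halpha : alpha < 2.

(* The two tails are O(|theta|^3) = |theta|^alpha O(theta). *)
Lemma tails_ratio (theta : R) : 0 < Rabs theta <= 1 ->
  Rabs ((Series (tail p alpha theta) + Series (tail p alpha (- theta))) / abspow theta alpha)
  <= 2 * Series (weight alpha) * Rabs theta.
Proof.
  intros Hth. pose proof PI_gt_3.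
  assert (Hne : theta <> 0) by (intros ->; rewrite Rabs_R0 in Hth; lra).
  destruct (tail_series p alpha Hp Halpha theta) as [_ B1]; [lra|].
  destruct (tail_series p alpha Hp Halpha (- theta)) as [_ B2]; [rewrite Rabs_Ropp; lra|].
  replace (- theta / 2) with (- (theta / 2)) in B2 by field. rewrite sin_neg, Rabs_Ropp in B2.
  pose proof (Series_weight_nonneg alpha Halpha) as HK.
  pose proof (sin_half_cube_le theta Hth) as Hs.
  pose proof (abs_sq_le_abspow alpha theta ltac:(lra) Hth) as Hsq.
  set (K := Series (weight alpha)) in *. set (P := abspow theta alpha) in *.
  assert (HP : 0 < P) by (unfold P; rewrite abspow_nonzero by exact Hne; apply Rpower_gt_0).
  rewrite Rabs_div, (Rabs_pos_eq P) by lra.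
  apply Rcomplements.Rle_div_l; [exact HP|].
  eapply Rle_trans; [apply Rabs_triang|].
  assert (H3 : 8 * Rabs (sin (theta / 2)) ^ 3 * K <= Rabs theta ^ 3 * K)
    by (apply Rmult_le_compat_r; lra).
  assert (Rabs theta ^ 3 * K <= Rabs theta * P * K).
  { replace (Rabs theta ^ 3) with (Rabs theta * Rabs theta ^ 2) by ring.
    apply Rmult_le_compat_r; [exact HK|]. apply Rmult_le_compat_l; [apply Rabs_pos|exact Hsq]. }
  lra.
Qed.

Lemma f_p_alpha_ratio_bound (theta : R) : 0 < Rabs theta <= 1 ->
  Rabs (f_p_alpha p alpha theta / abspow theta alpha - 1)
  <= (INR (p + 1) + 2 * Series (weight alpha)) * Rabs theta.
Proof.
  intros Hth. pose proof PI_gt_3.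
  assert (Hne : theta <> 0) by (intros ->; rewrite Rabs_R0 in Hth; lra).
  assert (HP : abspow theta alpha <> 0)
    by (rewrite abspow_nonzero by exact Hne; pose proof (Rpower_gt_0 (Rabs theta) alpha); lra).
  rewrite (f_p_alpha_split p alpha Hp Halpha) by lra.
  replace ((fterm p alpha theta 0 + Series (tail p alpha theta) + Series (tail p alpha (- theta)))
             / abspow theta alpha - 1)
    with ((fterm p alpha theta 0 / abspow theta alpha - 1)
          + (Series (tail p alpha theta) + Series (tail p alpha (- theta))) / abspow theta alpha)
    by (field; exact HP).
  eapply Rle_trans; [apply Rabs_triang|].
  pose proof (central_term_ratio p alpha theta Hth). pose proof (tails_ratio theta Hth). lra.
Qed.

Lemma f_p_alpha_zero : f_p_alpha p alpha 0 = 0.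
Proof.
  pose proof PI_gt_3.
  destruct (tail_series p alpha Hp Halpha 0) as [_ Hb]; [rewrite Rabs_R0; lra|].
  replace (0 / 2) with 0 in Hb by field.
  rewrite sin_0, Rabs_R0, pow_i, !Rmult_0_r, Rmult_0_l in Hb by lia.
  assert (Htail : Series (tail p alpha 0) = 0)
    by (apply Rabs_eq_0; pose proof (Rabs_pos (Series (tail p alpha 0))); lra).
  rewrite (f_p_alpha_split p alpha Hp Halpha) by (rewrite Rabs_R0; lra).
  rewrite Ropp_0, Htail. unfold fterm, abspow.
  destruct (Req_EM_T (0 + 2 * IZR 0 * PI) 0) as [_|E]; [ring|].
  exfalso. apply E. simpl. ring.
Qed.

End Asymptotics.

Theorem corollary5p3 (alpha : R) (p : nat) :
  1 < alpha < 2 -> (2 <= p)%nat ->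
  (forall theta, -PI <= theta <= PI -> 0 <= f_p_alpha p alpha theta) /\
  (forall theta, -PI <= theta <= PI -> (f_p_alpha p alpha theta = 0 <-> theta = 0)) /\
  (exists L : R, 0 < L /\
     is_lim (fun theta => f_p_alpha p alpha theta / abspow theta alpha) 0 L).
Proof.
  intros Halpha Hp.
  assert (Hzero := f_p_alpha_zero p alpha Hp (proj2 Halpha)).
  assert (Hpos : forall theta, -PI <= theta <= PI -> theta <> 0 -> 0 < f_p_alpha p alpha theta).
  { intros theta Hth Hne. destruct (Rlt_or_le 0 theta).
    - apply f_p_alpha_pos_right; [exact Hp|lra|lra].
    - rewrite <- f_p_alpha_even. apply f_p_alpha_pos_right; [exact Hp|lra|lra]. }
  split; [|split].
  - intros theta Hth. destruct (Req_dec theta 0) as [->|Hne]; [lra|].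
    left. apply Hpos; assumption.
  - intros theta Hth. split; [|intros ->; exact Hzero].
    intros Hf. destruct (Req_dec theta 0) as [E|Hne]; [exact E|].
    pose proof (Hpos theta Hth Hne). lra.
  - exists 1. split; [lra|].
    apply (is_lim_of_linear_bound _ 1 (INR (p + 1) + 2 * Series (weight alpha))).
    intros y Hy. apply f_p_alpha_ratio_bound; [exact Hp|lra|lra].
Qed.
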